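(* Let $\mathcal C\subseteq2^{[n]}$ be a stable hyperplane code. Then $\mathcal C$ has no sphere link obstructions: there is no non-maximal face $F$ of the polar complex $\Gamma(\mathcal C)$ such that $\operatorname{link}_F\Gamma(\mathcal C)$ is neither collapsible nor equal to $\Gamma(2^{[n]\setminus\underline F})$.
   Context: A code is a subset $\mathcal C\subseteq 2^{[n]}$. An oriented affine hyperplane in $\mathbb R^d$ is $H=\{x: w\cdot x-h=0\}$ with $w\neq0$, and $H^{+}=\{w\cdot x-h>0\}$, $H^-=\{w\cdot x-h<0\}$. For hyperplanes $\mathcal H=\{H_1,\dots,H_n\}$ and open convex $X\subseteq\mathbb R^d$, the atom of $\sigma\subseteq[n]$ is $A_\sigma=\bigl(\bigcap_{i\in\sigma}(H_i^+\cap X)\bigr)\setminus\bigcup_{j\notin\sigma}H_j^+$ ($A_\emptyset=X\setminus\bigcup_iH_i^+$), and $\mathrm{code}(\mathcal H,X)=\{\sigma:A_\sigma\neq\emptyset\}$. $(\mathcal H,X)$ is stable if $X$ is open convex and whenever $X\cap\bigcap_{i\in\sigma}H_i\ne\emptyset$, $\dim\bigcap_{i\in\sigma}H_i=d-|\sigma|$. A stable hyperplane code is $\mathrm{code}(\mathcal H,X)$ for a stable pair. Polar complex: on vertex set $[n]\sqcup\overline{[n]}$, $\overline{[n]}=\{\bar1,\dots,\bar n\}$, let $\Sigma(\sigma)=\sigma\sqcup\{\bar i:i\in[n]\setminus\sigma\}$ and $\Gamma(\mathcal C)$ be the simplicial complex of all subsets of the sets $\Sigma(\sigma)$, $\sigma\in\mathcal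 C$. For a face $F$ write $F=F^+\sqcup\{\bar j:j\in F^-\}$ with $F^\pm\subseteq[n]$; its support is $\underline F=F^+\cup F^-$. For $S\subseteq[n]$, $\Gamma(2^S)$ is the simplicial complex on $S\sqcup\{\bar i:i\in S\}$ whose faces are all subsets containing no pair $\{i,\bar i\}$ (for $S=\emptyset$ it is $\{\emptyset\}$). $\operatorname{link}_F\Delta=\{\nu\in\Delta:\nu\cap F=\emptyset,\nu\cup F\in\Delta\}$. A free pair in $\Delta$ is $(\sigma,\tau)$ with $\tau$ a facet, $\sigma\subsetneq\tau$, $\sigma$ in no other facet; collapsing along $\sigma$ gives $\{\nu\in\Delta:\nu\not\supseteq\sigma\}$; $\Delta$ is collapsible if finitely many collapses yield the void complex $\{\}$ (so $\{\}$ is collapsible, $\{\emptyset\}$ is not). *)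

From HB Require Import structures.
From mathcomp Require Import all_boot all_order all_algebra.
From mathcomp Require Import reals.
Set Implicit Arguments. Unset Strict Implicit. Unset Printing Implicit Defensive.
Import Order.TTheory GRing.Theory Num.Theory.
Local Open Scope ring_scope.

Section Geometry.
Variables (R : realType) (d : nat).

Definition dotp (u v : 'rV[R]_d) : R := \sum_(j < d) u 0 j * v 0 j.

Definition is_open (X : 'rV[R]_d -> Prop) : Prop :=
  forall x, X x -> exists2 e : R, 0 < e &
    forall y : 'rV[R]_d, (forall j, `|y 0 j - x 0 j| < e) -> X y.

Definition is_convex (X : 'rV[R]_d -> Prop) : Prop :=
  forall x y, X x -> X y -> forall t : R, 0 <= t -> t <= 1 ->
    X (t *: x + (1 - t) *: y).

Definition affine_dim (A : 'rV[R]_d -> Prop) (k : nat) : Prop :=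
  exists (x0 : 'rV[R]_d) (M : 'M[R]_d),
    (forall y, A y <-> (y - x0 <= M)%MS) /\ \rank M = k.

End Geometry.

Section Codes.
Variables (R : realType) (d n : nat).
(* hyperplane H_i = {x : w i . x - h i = 0}, oriented by H_i^+ = {w i . x - h i > 0} *)
Variables (w : 'I_n -> 'rV[R]_d) (h : 'I_n -> R) (X : 'rV[R]_d -> Prop).

Definition in_pos (i : 'I_n) (x : 'rV[R]_d) : Prop := dotp (w i) x - h i > 0.

Definition atom (sigma : {set 'I_n}) (x : 'rV[R]_d) : Prop :=
  X x /\ (forall i, i \in sigma -> in_pos i x) /\
  (forall j, j \notin sigma -> ~ in_pos j x).

Definition is_code_of (C : {set {set 'I_n}}) : Prop :=
  forall sigma : {set 'I_n}, sigma \in C <-> exists x, atom sigma x.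

Definition hyp_inter (sigma : {set 'I_n}) (x : 'rV[R]_d) : Prop :=
  forall i, i \in sigma -> dotp (w i) x - h i = 0.

Definition stable_pair : Prop :=
  (forall i, w i != 0) /\ is_open X /\ is_convex X /\
  forall sigma : {set 'I_n},
    (exists x, X x /\ hyp_inter sigma x) ->
    exists k : nat, affine_dim (hyp_inter sigma) k /\
                    (k%:Z = d%:Z - (#|sigma|)%:Z)%R.

End Codes.

Definition stable_hyperplane_code (R : realType) (n : nat)
  (C : {set {set 'I_n}}) : Prop :=
  exists (d : nat) (w : 'I_n -> 'rV[R]_d) (h : 'I_n -> R) (X : 'rV[R]_d -> Prop),
    stable_pair w h X /\ is_code_of w h X C.

(* Vertex set [n] ⊔ \bar[n]:  inl i = i,  inr i = \bar i. *)
Notation pvert n := ('I_n + 'I_n)%type.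
Notation cplx n := {set {set pvert n}}.

Definition Sigma n (sigma : {set 'I_n}) : {set pvert n} :=
  (inl @: sigma) :|: (inr @: ~: sigma).

Definition polar n (C : {set {set 'I_n}}) : cplx n :=
  [set F : {set pvert n} | [exists sigma in C, F \subset Sigma sigma]].

Definition Fplus n (F : {set pvert n}) : {set 'I_n} := [set i | inl i \in F].
Definition Fminus n (F : {set pvert n}) : {set 'I_n} := [set i | inr i \in F].
Definition supp n (F : {set pvert n}) : {set 'I_n} := Fplus F :|: Fminus F.

(* Gamma(2^S): all subsets of S ⊔ \bar S containing no pair {i, \bar i} *)
Definition polar_full n (S : {set 'I_n}) : cplx n :=
  [set G : {set pvert n} | (G \subset (inl @: S) :|: (inr @: S)) &&
           [forall i, ~~ ((inl i \in G) && (inr i \in G))]].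

Definition link n (F : {set pvert n}) (D : cplx n) : cplx n :=
  [set nu in D | [disjoint nu & F] && (nu :|: F \in D)].

Definition facet (T : finType) (D : {set {set T}}) (tau : {set T}) : bool :=
  (tau \in D) && [forall nu in D, ~~ (tau \proper nu)].

Definition free_pair (T : finType) (D : {set {set T}}) (sigma tau : {set T}) : bool :=
  facet D tau && (sigma \proper tau) &&
  [forall nu, (facet D nu && (sigma \subset nu)) ==> (nu == tau)].

Definition collapse (T : finType) (D : {set {set T}}) (sigma : {set T}) :
  {set {set T}} := [set nu in D | ~~ (sigma \subset nu)].

Inductive collapsible (T : finType) : {set {set T}} -> Prop :=
| collapsible_void : collapsible set0
| collapsible_step (D : {set {set T}}) (sigma tau : {set T}) :
    free_pair D sigma tau -> collapsible (collapse D sigma) -> collapsible D.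

Definition nonmaximal_face (T : finType) (D : {set {set T}}) (F : {set T}) : bool :=
  (F \in D) && ~~ facet D F.

(* Write [N(T, S)] for the complex of sign patterns on the hyperplanes indexed
   by [S] that are realised at points of [X] lying on the hyperplanes indexed
   by [T].  The link of a face [F] of the polar complex is [N(set0, S)] for the
   set [S] of hyperplanes outside the support of [F], computed in the open
   convex set [X_F] cut out of [X] by the open halfspaces of [F].
   For [k \in S], [N(T, S)] is the union of the cones with apexes [k] and
   [\bar k] over the links of these two vertices, and the two links meet in
   [N(k |: T, S :\ k)]: a segment joining the two sides of [H_k] crosses it
   (convexity), and a point on [H_k] can be pushed to either side (stability).
   Two cones glued along a collapsible complex form a collapsible complex, so
   by induction on [S] either [N(T, S)] is collapsible or [X] meets all the
   hyperplanes of [T :|: S]; in the latter case stability makes every sign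
   pattern on [S] realisable, i.e. [N(T, S) = Gamma(2^S)]. *)

From HB Require Import structures.
From mathcomp Require Import all_boot all_order all_algebra.
From mathcomp Require Import reals boolp.
From mathcomp.algebra_tactics Require Import ring lra.
From mathcomp Require Import zify.
Set Implicit Arguments. Unset Strict Implicit. Unset Printing Implicit Defensive.
Import Order.TTheory GRing.Theory Num.Theory.

Section Collapsibility.
Variable T : finType.
Implicit Types (D P Q Y : {set {set T}}) (G rho nu sigma tau : {set T}) (u v : T).

Definition down_closed D := forall G rho, rho \in D -> G \subset rho -> G \in D.

Definition cone v Q := [set v |: G | G in Q] :|: Q.

Lemma coneP v Q nu :
  reflect ((exists2 G, G \in Q & nu = v |: G) \/ nu \in Q) (nu \in cone v Q).
Proof. by rewrite inE; apply: (iffP orP) => -[/imsetP|]; auto. Qed.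

Lemma cone_top v Q G : G \in Q -> v |: G \in cone v Q.
Proof. by move=> GQ; apply/coneP; left; exists G. Qed.

Lemma cone_base v Q G : G \in Q -> G \in cone v Q.
Proof. by move=> GQ; apply/coneP; right. Qed.

Lemma subsetU1E v G rho : v \notin G -> (G \subset v |: rho) = (G \subset rho).
Proof.
move=> vG; have /setDidPl GvE : [disjoint G & [set v]] by rewrite disjoint_sym disjoints1.
by rewrite -subDset GvE.
Qed.

Lemma setU1SE v G rho :
  v \notin G -> v \notin rho -> (v |: G \subset v |: rho) = (G \subset rho).
Proof.
move=> vG vrho; apply/idP/idP => [|/(setUS [set v])//].
by rewrite -(subsetU1E _ vG); apply: subset_trans; apply: subsetU1.
Qed.

Lemma setU1_properE v G rho :
  v \notin G -> v \notin rho -> (v |: G \proper v |: rho) = (G \proper rho).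
Proof. by move=> vG vrho; rewrite !properE !setU1SE. Qed.

Lemma proper_setU1 v G : v \notin G -> G \proper v |: G.
Proof. by move=> vG; rewrite properUr // sub1set. Qed.

Lemma collapse_cone_base v Q Y G :
    G \in Q -> (forall rho, rho \in Q -> G \subset rho -> rho = G) ->
    (forall rho, rho \in Q -> v \notin rho) ->
    (forall rho, rho \in Y -> ~~ (G \subset rho)) ->
  free_pair (cone v Q :|: Y) G (v |: G) /\
  collapse (cone v Q :|: Y) G = cone v (Q :\ G) :|: Y.
Proof.
move=> GQ Gmax vQ GY; have vG := vQ _ GQ; set K := cone v Q :|: Y.
have above_G nu : nu \in K -> G \subset nu -> nu = G \/ nu = v |: G.
  case/setUP => [/coneP[[rho rhoQ ->]|nuQ]|nuY] Gnu.
  - by right; rewrite (Gmax rho rhoQ) // -(subsetU1E _ vG).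
  - by left; apply: Gmax.
  - by move: (GY _ nuY); rewrite Gnu.
have vGK : v |: G \in K by rewrite inE cone_top.
have facet_vG : facet K (v |: G).
  rewrite /facet vGK; apply/forall_inP => nu nuK; apply/negP => vGnu.
  have [nuG|nuvG] := above_G nu nuK (subset_trans (subsetU1 v G) (proper_sub vGnu)).
  - by rewrite nuG properE subsetU1 andbF in vGnu.
  - by rewrite nuvG properxx in vGnu.
split.
  rewrite /free_pair facet_vG proper_setU1 //=; apply/forallP => nu.
  apply/implyP => /andP[/andP[nuK /forall_inP nu_max] Gnu].
  have [nuG|->//] := above_G nu nuK Gnu.
  by have := nu_max _ vGK; rewrite nuG proper_setU1.
apply/setP => nu; apply/setIdP/setUP => [[nuK nGnu]|].
  case/setUP: nuK => [/coneP[[rho rhoQ nuE]|nuQ]|]; last by right.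
  - left; rewrite nuE cone_top // !inE rhoQ andbT.
    by apply: contraNneq nGnu => rhoG; rewrite nuE rhoG subsetU1.
  - left; rewrite cone_base // !inE nuQ andbT.
    by apply: contraNneq nGnu => ->.
case=> [/coneP[[rho /setD1P[rhoG rhoQ] ->]|/setD1P[nuG nuQ]]|nuY].
- rewrite inE cone_top // (subsetU1E _ vG); split=> //.
  by apply: contra rhoG => Grho; rewrite (Gmax rho rhoQ Grho).
- rewrite inE cone_base //; split=> //.
  by apply: contra nuG => Gnu; rewrite (Gmax nu nuQ Gnu).
- by rewrite inE nuY orbT GY.
Qed.

(* The faces of [Q :\: P] are collapsed away one at a time, largest first. *)
Lemma collapsible_cone_extend v Y P Q :
    down_closed P -> collapsible (cone v P :|: Y) -> P \subset Q ->
    (forall rho, rho \in Q -> v \notin rho) ->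
    (forall G rho, G \in Q :\: P -> rho \in Y -> ~~ (G \subset rho)) ->
  collapsible (cone v Q :|: Y).
Proof.
move=> closedP collP; have [m] := ubnP #|Q|.
elim: m Q => // m IH Q ltQm PQ vQ QY.
have [QP0|/set0Pn[G0 G0QP]] := eqVneq (Q :\: P) set0.
  suff -> : Q = P by [].
  by apply/eqP; rewrite eqEsubset PQ andbT -setD_eq0 QP0.
have [G GQP Gmax] := arg_maxnP (fun G => #|G|) G0QP.
have /setDP[GQ GP] := GQP.
have G_maximal rho : rho \in Q -> G \subset rho -> rho = G.
  move=> rhoQ Grho; have rhoP : rho \notin P.
    by apply: contra GP => rhoP; apply: closedP Grho.
  apply/esym/eqP; rewrite eqEcard Grho; apply: Gmax.
  exact/setDP.
have [fp collapseE] := collapse_cone_base GQ G_maximal vQ (QY G^~ GQP).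
apply: collapsible_step fp _; rewrite collapseE; apply: IH.
- by rewrite (cardsD1 G Q) GQ in ltQm.
- apply/subsetP => x xP; rewrite !inE (subsetP PQ _ xP) andbT.
  by apply: contraNneq GP => <-.
- by move=> rho /setD1P[_ /vQ].
- by move=> G' rho /setDP[/setD1P[_ G'Q] G'P]; apply: QY; rewrite inE G'Q G'P.
Qed.

Lemma collapsible_cone v Q :
  (forall rho, rho \in Q -> v \notin rho) -> collapsible (cone v Q).
Proof.
move=> vQ; rewrite -[cone v Q]setU0.
apply: (@collapsible_cone_extend v set0 set0) => //.
- by move=> G rho; rewrite inE.
- by rewrite /cone imset0 !setU0; constructor.
- exact: sub0set.
- by move=> G rho _; rewrite inE.
Qed.

(* Each collapse of [D] along [sigma] lifts to a collapse of the cone tops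
   along [v |: sigma]. *)
Lemma collapsible_tops_setU v D Y :
    collapsible D -> (forall rho, rho \in D -> v \notin rho) ->
    collapsible Y -> (forall rho, rho \in Y -> v \notin rho) ->
  collapsible ([set v |: G | G in D] :|: Y).
Proof.
move=> collD; elim: collD => [|{}D sigma tau fp _ IH] vD collY vY.
  by rewrite imset0 set0U.
set K := _ :|: Y.
have notY nu G : nu \in Y -> v \in G -> ~~ (G \subset nu).
  by move=> nuY vG; apply: contra (vY _ nuY) => /subsetP; apply.
have facetE rho : rho \in D -> facet K (v |: rho) = facet D rho.
  move=> rhoD; rewrite /facet rhoD inE imset_f //=.
  apply/forall_inP/forall_inP => maxrho nu nuD.
    by have := maxrho (v |: nu); rewrite inE imset_f // setU1_properE ?vD //; apply.
  case/setUP: nuD => [/imsetP[rho' rho'D ->]|nuY].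
    by rewrite setU1_properE ?vD // maxrho.
  by apply: contraNN (notY _ _ nuY (setU11 v rho)) => /proper_sub.
case/andP: fp => /andP[facet_tau sigma_tau] /forallP tau_uniq.
have tauD : tau \in D by case/andP: facet_tau.
have vsigma : v \notin sigma.
  by apply: contra (vD _ tauD); apply/subsetP/proper_sub.
have fp' : free_pair K (v |: sigma) (v |: tau).
  rewrite /free_pair facetE // facet_tau setU1_properE ?(vD _ tauD) // sigma_tau /=.
  apply/forallP => nu; apply/implyP => /andP[facet_nu sigma_nu].
  case/andP: (facet_nu) => /setUP[/imsetP[rho rhoD nuE]|nuY] _; last first.
    by rewrite (negbTE (notY _ _ nuY (setU11 v sigma))) in sigma_nu.
  rewrite nuE facetE // in facet_nu; rewrite nuE (setU1SE vsigma (vD _ rhoD)) in sigma_nu.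
  by have /implyP := tau_uniq rho; rewrite facet_nu sigma_nu nuE => /(_ isT)/eqP->.
apply: collapsible_step fp' _.
suff -> : collapse K (v |: sigma) = [set v |: G | G in collapse D sigma] :|: Y.
  by apply: IH => // rho /setIdP[/vD].
apply/setP => nu; apply/setIdP/setUP => [[/setUP[/imsetP[rho rhoD ->]|nuY] ns]|].
- by left; apply: imset_f; rewrite inE rhoD -(setU1SE vsigma (vD _ rhoD)).
- by right.
case=> [/imsetP[rho /setIdP[rhoD ns] ->]|nuY].
- by rewrite inE imset_f // (setU1SE vsigma (vD _ rhoD)).
- by rewrite inE nuY orbT notY ?setU11.
Qed.

Lemma collapsible_cone_setU u v A B :
    u != v -> down_closed A -> down_closed B ->
    (forall rho, rho \in A -> (u \notin rho) && (v \notin rho)) ->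
    (forall rho, rho \in B -> (u \notin rho) && (v \notin rho)) ->
    collapsible (A :&: B) ->
  collapsible (cone u A :|: cone v B).
Proof.
move=> uv closedA closedB uvA uvB collAB.
have uA rho : rho \in A -> u \notin rho by case/uvA/andP.
have vA rho : rho \in A -> v \notin rho by case/uvA/andP.
have uB rho : rho \in B -> u \notin rho by case/uvB/andP.
have vB rho : rho \in B -> v \notin rho by case/uvB/andP.
have uZ rho : rho \in cone v B -> u \notin rho.
  by case/coneP=> [[b bB ->]|/uB//]; rewrite in_setU1 negb_or uv uB.
have collAB_Z : collapsible (cone u (A :&: B) :|: cone v B).
  have -> : cone u (A :&: B) :|: cone v B = [set u |: G | G in A :&: B] :|: cone v B.
    rewrite {1}/cone -setUA; congr (_ :|: _).
    by apply/setUidPr/subsetP => G /setIP[_ GB]; apply: cone_base.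
  apply: collapsible_tops_setU => //; first by move=> rho /setIP[/uA].
  exact: collapsible_cone.
apply: collapsible_cone_extend collAB_Z _ _ _ => //.
- move=> G rho /setIP[rhoA rhoB] Grho.
  by rewrite inE (closedA _ _ rhoA Grho) (closedB _ _ rhoB Grho).
- exact: subsetIl.
- move=> G rho /setDP[GA]; rewrite inE GA /= => GB.
  case/coneP=> [[b bB ->]|rhoB]; apply: contra GB => Grho; last exact: closedB Grho.
  by rewrite subsetU1E ?vA // in Grho; apply: closedB Grho.
Qed.

Definition vertex_link v D := [set G in D | (v \notin G) && (v |: G \in D)].

Lemma vertex_link_down_closed v D : down_closed D -> down_closed (vertex_link v D).
Proof.
move=> closedD G rho /setIdP[rhoD /andP[vrho vrhoD]] Grho.
rewrite inE (closedD _ _ rhoD Grho) (contra (subsetP Grho v) vrho) /=.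
by apply: (closedD _ _ vrhoD); apply: setUS.
Qed.

Lemma setU1_in_cone_link v D G :
  down_closed D -> v |: G \in D -> G \in cone v (vertex_link v D).
Proof.
move=> closedD vGD; have GvD : G :\ v \in vertex_link v D.
  have vGvE : v |: (G :\ v) = v |: G by apply/setP => x; rewrite !inE; case: (x =P v).
  rewrite inE setD11 vGvE vGD andbT (closedD _ _ vGD) //.
  exact: subset_trans (subsetDl G [set v]) (subsetU1 v G).
have [vG|vG] := boolP (v \in G).
  by rewrite -(setD1K vG); apply: cone_top.
suff <- : G :\ v = G by apply: cone_base.
by apply/setDidPl; rewrite disjoint_sym disjoints1.
Qed.

Lemma cone_link_decomposition u v D :
    down_closed D -> (forall G, G \in D -> (u |: G \in D) || (v |: G \in D)) ->
  D = cone u (vertex_link u D) :|: cone v (vertex_link v D).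
Proof.
move=> closedD ext; apply/setP => G; apply/idP/setUP => [GD|].
  by case/orP: (ext G GD) => /(setU1_in_cone_link closedD); [left|right].
have in_D w G' : G' \in cone w (vertex_link w D) -> G' \in D.
  by case/coneP=> [[rho /setIdP[_ /andP[_ ?]] ->]|/setIdP[]].
by case=> /in_D.
Qed.

Theorem collapsible_of_vertex_links u v D :
    down_closed D -> u != v ->
    (forall G, G \in D -> ~~ ((u \in G) && (v \in G))) ->
    (forall G, G \in D -> (u |: G \in D) || (v |: G \in D)) ->
    collapsible (vertex_link u D :&: vertex_link v D) ->
  collapsible D.
Proof.
move=> closedD uv no_uv ext coll; rewrite (cone_link_decomposition closedD ext).
apply: collapsible_cone_setU => //; try exact: vertex_link_down_closed.
- move=> rho /setIdP[_ /andP[urho urhoD]]; rewrite urho.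
  by apply: contra (no_uv _ urhoD) => vrho; rewrite setU11 setU1r.
- move=> rho /setIdP[_ /andP[vrho vrhoD]]; rewrite vrho andbT.
  by apply: contra (no_uv _ vrhoD) => urho; rewrite setU11 setU1r.
Qed.

End Collapsibility.

Section DotProduct.
Variables (R : realType) (d : nat).
Local Open Scope ring_scope.
Implicit Types (u x y : 'rV[R]_d).

Lemma dotpDr u x y : dotp u (x + y) = dotp u x + dotp u y.
Proof. by rewrite /dotp -big_split; apply: eq_bigr => j _; rewrite mxE mulrDr. Qed.

Lemma dotpZr u (a : R) x : dotp u (a *: x) = a * dotp u x.
Proof. by rewrite /dotp mulr_sumr; apply: eq_bigr => j _; rewrite mxE mulrCA. Qed.

Lemma dotpNl u x : dotp (- u) x = - dotp u x.
Proof. by rewrite /dotp -sumrN; apply: eq_bigr => j _; rewrite mxE mulNr. Qed.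

Lemma dotpBr u x y : dotp u (x - y) = dotp u x - dotp u y.
Proof. by rewrite dotpDr -scaleN1r dotpZr mulN1r. Qed.

Lemma dotp_sumr u (I : finType) (P : pred I) (F : I -> 'rV[R]_d) :
  dotp u (\sum_(i | P i) F i) = \sum_(i | P i) dotp u (F i).
Proof.
elim/big_rec2: _ => [|i a b _ IH]; last by rewrite dotpDr IH.
by rewrite /dotp big1 // => j _; rewrite mxE mulr0.
Qed.

Lemma affine_dim_uniq (A : 'rV[R]_d -> Prop) k1 k2 :
  affine_dim A k1 -> affine_dim A k2 -> k1 = k2.
Proof.
have dir_sub x0 (M : 'M[R]_d) x1 (M' : 'M[R]_d) :
    (forall y, A y <-> (y - x0 <= M)%MS) -> (forall y, A y <-> (y - x1 <= M')%MS) ->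
    (M <= M')%MS.
  move=> AM AM'; apply/row_subP => i.
  have x0M' : (x0 - x1 <= M')%MS by apply/AM'/AM; rewrite subrr sub0mx.
  have x0iM' : (x0 + row i M - x1 <= M')%MS.
    by apply/AM'/AM; rewrite addrAC subrr add0r row_sub.
  have -> : row i M = (x0 + row i M - x1) - (x0 - x1).
    by rewrite opprB addrA subrK addrAC subrr add0r.
  by rewrite addmx_sub ?eqmx_opp.
move=> [x0 [M [AM <-]]] [x1 [M' [AM' <-]]]; apply/eqP; rewrite eqn_leq.
by rewrite !mxrankS // (dir_sub x0 M x1 M', dir_sub x1 M' x0 M).
Qed.

End DotProduct.

Section SmallPositiveReals.
Variable R : realType.
Local Open Scope ring_scope.
Implicit Types (P Q : R -> Prop).

Definition near0p P := exists2 e : R, 0 < e & forall t, 0 < t -> t <= e -> P t.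

Lemma near0pW P Q : (forall t, 0 < t -> P t -> Q t) -> near0p P -> near0p Q.
Proof. by move=> PQ [e e_gt0 Pe]; exists e => // t t_gt0 te; apply/PQ/Pe. Qed.

Lemma near0p_and P Q : near0p P -> near0p Q -> near0p (fun t => P t /\ Q t).
Proof.
move=> [e1 e1_gt0 P_e1] [e2 e2_gt0 Q_e2]; exists (Num.min e1 e2).
  by rewrite lt_min e1_gt0 e2_gt0.
by move=> t t_gt0; rewrite le_min => /andP[te1 te2]; split; [apply: P_e1 | apply: Q_e2].
Qed.

Lemma near0p_forall (I : finType) (A : pred I) (P : I -> R -> Prop) :
  (forall i, A i -> near0p (P i)) -> near0p (fun t => forall i, A i -> P i t).
Proof.
move=> nearP; suff : near0p (fun t => forall i, i \in enum I -> A i -> P i t).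
  by apply: near0pW => t _ Pt i; apply: Pt; rewrite mem_enum.
elim: (enum I) => [|i s IH]; first by exists 1.
have nearPi : near0p (fun t => A i -> P i t).
  have [Ai|nAi] := boolP (A i); first by apply: near0pW (nearP i Ai) => t _ Pit _.
  by exists 1 => // t _ _ /negP.
apply: near0pW (near0p_and nearPi IH) => t _ [Pit Ps] j.
by rewrite inE => /orP[/eqP->|/Ps].
Qed.

Lemma near0p_gt0_affine (c b : R) : 0 < c -> near0p (fun t => 0 < c + t * b).
Proof.
move=> c_gt0; have b1_gt0 : 0 < `|b| + 1 by rewrite ltr_pwDr.
exists (c / (`|b| + 1)); first exact: divr_gt0.
move=> t t_gt0; rewrite ler_pdivlMr // => tb.
have := ler_norm (- b); rewrite normrN => nb; nra.
Qed.

End SmallPositiveReals.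

Section LineOpen.
Variables (R : realType) (d : nat).
Local Open Scope ring_scope.

Definition line_open (X : 'rV[R]_d -> Prop) :=
  forall x v, X x -> near0p (fun t => X (x + t *: v)).

Lemma open_line_open X : is_open X -> line_open X.
Proof.
move=> openX x v Xx; have [e e_gt0 ball_e] := openX x Xx.
apply: near0pW (near0p_forall (fun j (_ : true) => near0p_gt0_affine (- `|v 0 j|) e_gt0)).
move=> t t_gt0 near_t; apply: ball_e => j; have := near_t j isT.
by rewrite !mxE addrAC subrr add0r normrM gtr0_norm //; lra.
Qed.

End LineOpen.

Section Arrangement.
Variables (R : realType) (d n : nat) (w : 'I_n -> 'rV[R]_d) (h : 'I_n -> R).
Local Open Scope ring_scope.
Implicit Types (x y p v : 'rV[R]_d) (a b : pvert n) (i k : 'I_n).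
Implicit Types (T U S sigma : {set 'I_n}) (G F : {set pvert n}).

(* [aff a] is positive exactly on the open halfspace of the vertex [a]:
   [H_i^+] for [inl i] (the vertex [i]) and [H_i^-] for [inr i] (the vertex [\bar i]). *)
Definition aff a x := match a with inl i => dotp (w i) x - h i | inr i => h i - dotp (w i) x end.
Definition normal a := match a with inl i => w i | inr i => - w i end.
Definition vindex a := match a with inl i => i | inr i => i end.
Definition verts S : {set pvert n} := inl @: S :|: inr @: S.

Lemma aff_inr i x : aff (inr i) x = - aff (inl i) x.
Proof. by rewrite /= opprB. Qed.

Lemma aff_line a x v t : aff a (x + t *: v) = aff a x + t * dotp (normal a) v.
Proof. by case: a => i /=; rewrite ?dotpNl dotpDr dotpZr; ring. Qed.

Lemma aff_convex a t x y :
  aff a (t *: x + (1 - t) *: y) = t * aff a x + (1 - t) * aff a y.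
Proof. by case: a => i /=; rewrite dotpDr !dotpZr; ring. Qed.

Lemma aff_hyp_inter U a x : hyp_inter w h U x -> vindex a \in U -> aff a x = 0.
Proof. by move=> Ux; case: a => i /= /Ux // Uxi; rewrite -opprB Uxi oppr0. Qed.

Lemma in_verts a S : (a \in verts S) = (vindex a \in S).
Proof.
by case: a => i; apply/setUP/idP => [[] /imsetP[j jS /(congr1 vindex) ->]|iS] //;
  [left|right]; apply: imset_f.
Qed.

Definition stable_in (X : 'rV[R]_d -> Prop) := forall T,
  (exists x, X x /\ hyp_inter w h T x) ->
  exists k : nat, affine_dim (hyp_inter w h T) k /\ k%:Z = d%:Z - #|T|%:Z.

Section Domain.
Variable X : 'rV[R]_d -> Prop.
Hypothesis stableX : stable_in X.

(* Otherwise adding [j] to [T] would leave the flat [H_T] unchanged while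
   lowering its prescribed dimension. *)
Lemma stable_normal_independent T j x :
    X x -> hyp_inter w h (j |: T) x -> j \notin T ->
  exists v, (forall i, i \in T -> dotp (w i) v = 0) /\ dotp (w j) v != 0.
Proof.
move=> Xx xjT jT; apply: contrapT => no_v.
have ortho_j v : (forall i, i \in T -> dotp (w i) v = 0) -> dotp (w j) v = 0.
  by move=> vT; apply/eqP/contraT => vj; case: no_v; exists v.
have xT : hyp_inter w h T x by move=> i iT; apply: xjT; rewrite setU1r.
have flatE y : hyp_inter w h T y <-> hyp_inter w h (j |: T) y.
  split=> [yT|yjT i iT]; last by apply: yjT; rewrite setU1r.
  have yxT i : i \in T -> dotp (w i) (y - x) = 0.
    by move=> iT; rewrite dotpBr; have := yT i iT; have := xT i iT; lra.
  move=> i /setU1P[->|/yT//].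
  by have := ortho_j _ yxT; have := xjT j (setU11 _ _); rewrite dotpBr; lra.
have [k1 [dim1 k1E]] := stableX (ex_intro _ x (conj Xx xT)).
have [k2 [dim2 k2E]] := stableX (ex_intro _ x (conj Xx xjT)).
have dim2' : affine_dim (hyp_inter w h T) k2.
  by case: dim2 => x0 [M [HM rkM]]; exists x0, M; split=> // y; rewrite flatE.
move: k2E; rewrite cardsU1 jT -(affine_dim_uniq dim1 dim2') k1E /=; lia.
Qed.

Lemma stable_solve_normals U p (s : 'I_n -> R) :
  X p -> hyp_inter w h U p -> exists v, forall i, i \in U -> dotp (w i) v = s i.
Proof.
move=> Xp pU.
have dual j : exists v, j \in U ->
    (forall i, i \in U :\ j -> dotp (w i) v = 0) /\ dotp (w j) v != 0.
  have [jU|] := boolP (j \in U); last by exists 0.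
  have [||v vj] := @stable_normal_independent (U :\ j) j p Xp.
  - by rewrite setD1K.
  - by rewrite setD11.
  - by exists v.
have [vs vsP] := choice dual.
exists (\sum_(j in U) (s j / dotp (w j) (vs j)) *: vs j) => i iU.
rewrite dotp_sumr (bigD1 i) //= big1 ?addr0 => [|j /andP[jU ji]].
  by rewrite dotpZr divfK //; case: (vsP i iU).
by rewrite dotpZr ((vsP j jU).1 i) ?mulr0 // in_setD1 iU andbT eq_sym.
Qed.

Definition realizes T G x :=
  [/\ X x, hyp_inter w h T x & forall a, a \in G -> 0 < aff a x].

Definition realizable T G := exists x, realizes T G x.

Lemma realizes_subset T G G' x : G' \subset G -> realizes T G x -> realizes T G' x.
Proof. by move=> /subsetP G'G [Xx xT Gx]; split=> // a /G'G/Gx. Qed.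

Lemma realizes_vindex T G x a : realizes T G x -> a \in G -> vindex a \notin T.
Proof.
move=> [_ xT Gx] /Gx ax; apply/negP => /(aff_hyp_inter xT) ax0.
by rewrite ax0 ltxx in ax.
Qed.

Lemma realizes_pair_free T G x i :
  realizes T G x -> ~~ ((inl i \in G) && (inr i \in G)).
Proof. by move=> [_ _ Gx]; apply/negP => /andP[/Gx ? /Gx]; rewrite aff_inr; lra. Qed.

Hypothesis lineX : line_open X.

(* The witness is [p + t *: v] for small [t > 0], where [w i . v] is [1], [-1]
   or [0] for [i \in U] according as [inl i], [inr i] or neither lies in [G]. *)
Lemma realizable_push T U G p :
    T \subset U -> X p -> hyp_inter w h U p ->
    (forall i, i \in U -> ~~ ((inl i \in G) && (inr i \in G))) ->
    (forall a, a \in G -> 0 < aff a p \/ vindex a \in U :\: T) ->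
  realizable T G.
Proof.
move=> TU Xp pU pair_free Gp.
pose s i : R := if inl i \in G then 1 else if inr i \in G then -1 else 0.
have [v vU] := stable_solve_normals s Xp pU.
have G_off_T a : a \in G -> vindex a \notin T.
  move=> aG; case: (Gp a aG) => [ap|/setDP[]//]; apply/negP => aT.
  by rewrite (aff_hyp_inter pU (subsetP TU _ aT)) ltxx in ap.
have normal_v a : a \in G -> vindex a \in U -> dotp (normal a) v = 1.
  case: a => i aG iU /=; rewrite ?dotpNl vU // /s aG //.
  by have := pair_free i iU; rewrite aG andbT => /negbTE->; rewrite opprK.
have near_v : near0p (fun t => X (p + t *: v) /\
                                forall a, a \in G -> 0 < aff a (p + t *: v)).
  apply: near0p_and (lineX v Xp) (near0p_forall _) => a aG.
  case: (Gp a aG) => [ap|/setDP[aU _]].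
    by apply: near0pW (near0p_gt0_affine (dotp (normal a) v) ap) => t _; rewrite aff_line.
  by exists 1 => // t t_gt0 _; rewrite aff_line (aff_hyp_inter pU aU) normal_v ?add0r ?mulr1.
have [e e_gt0 /(_ e e_gt0 (lexx e))[Xpe Gpe]] := near_v.
exists (p + e *: v); split=> // i iT; change (aff (inl i) (p + e *: v) = 0).
rewrite aff_line (@aff_hyp_inter U (inl i) _ pU (subsetP TU _ iT)) /= vU ?(subsetP TU) // /s.
by rewrite !ifN ?mulr0 ?addr0 //; apply/negP => /G_off_T; rewrite iT.
Qed.

Lemma realizable_sides T G k :
    k \notin T -> realizable (k |: T) G ->
  realizable T (inl k |: G) /\ realizable T (inr k |: G).
Proof.
move=> kT [x rx]; have [Xx xkT Gx] := rx.
have side b : vindex b = k -> realizable T (b |: G).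
  move=> bk; apply: (@realizable_push T (k |: T) _ x) => //; first exact: subsetU1.
    move=> i iU; apply/negP => /andP[/setU1P[li|/(realizes_vindex rx)/=]]; last by rewrite iU.
    by case/setU1P=> [|/(realizes_vindex rx)/=]; [rewrite -li | rewrite iU].
  move=> a /setU1P[->|/Gx]; last by left.
  by right; rewrite in_setD bk kT setU11.
by split; apply: side.
Qed.

Lemma realizable_extend T G k :
    k \notin T -> realizable T G ->
  realizable T (inl k |: G) \/ realizable T (inr k |: G).
Proof.
move=> kT [x [Xx xT Gx]].
have [neg|pos|zero] := ltgtP (aff (inl k) x) 0.
- by right; exists x; split=> // a /setU1P[->|/Gx//]; rewrite aff_inr oppr_gt0.
- by left; exists x; split=> // a /setU1P[->|/Gx//].
- left; apply: (realizable_sides kT _).1; exists x; split=> // i /setU1P[->|/xT//].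
  exact: zero.
Qed.

Hypothesis convX : is_convex X.

(* The segment between points on the two sides of [H_k] crosses it. *)
Lemma realizable_hyperplane T G k :
    realizable T (inl k |: G) -> realizable T (inr k |: G) ->
  realizable (k |: T) G.
Proof.
move=> [a [Xa aT aG]] [b [Xb bT bG]].
have fa_gt0 : 0 < aff (inl k) a by apply: aG; rewrite setU11.
have fb_lt0 : aff (inl k) b < 0 by have := bG (inr k) (setU11 _ _); rewrite aff_inr oppr_gt0.
pose t := - aff (inl k) b / (aff (inl k) a - aff (inl k) b).
have fab_gt0 : 0 < aff (inl k) a - aff (inl k) b by lra.
have tE : t * (aff (inl k) a - aff (inl k) b) = - aff (inl k) b by rewrite divfK ?lt0r_neq0.
have t_gt0 : 0 < t by apply: divr_gt0; lra.
have t_lt1 : t < 1 by rewrite ltr_pdivrMr // mul1r; lra.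
exists (t *: a + (1 - t) *: b); split; first exact: convX Xa Xb _ (ltW t_gt0) (ltW t_lt1).
  move=> i /setU1P[->|iT].
    by change (aff (inl k) (t *: a + (1 - t) *: b) = 0); rewrite aff_convex; nra.
  by change (aff (inl i) (t *: a + (1 - t) *: b) = 0); rewrite aff_convex /= aT ?bT // !mulr0 addr0.
by move=> c cG; rewrite aff_convex; have := aG c (setU1r _ cG); have := bG c (setU1r _ cG); nra.
Qed.

Definition nerve T S :=
  [set G : {set pvert n} | (G \subset verts S) && `[< realizable T G >]].

Lemma nerveP T S G : reflect (G \subset verts S /\ realizable T G) (G \in nerve T S).
Proof. by rewrite inE; apply: (iffP andP) => -[GS /asboolP]. Qed.

Lemma nerve_down_closed T S : down_closed (nerve T S).
Proof.
move=> G G' /nerveP[G'S [x rx]] GG'; apply/nerveP; split; first exact: subset_trans GG' G'S.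
by exists x; apply: realizes_subset rx.
Qed.

Lemma nerve_pair_free T S G i : G \in nerve T S -> ~~ ((inl i \in G) && (inr i \in G)).
Proof. by case/nerveP=> _ [x /realizes_pair_free]. Qed.

Lemma nerve_extend T S G k :
    k \in S -> k \notin T -> G \in nerve T S ->
  (inl k |: G \in nerve T S) || (inr k |: G \in nerve T S).
Proof.
move=> kS kT /nerveP[GS /(realizable_extend kT)].
have kGS b : vindex b = k -> b |: G \subset verts S.
  by move=> bk; rewrite subUset sub1set in_verts bk kS GS.
by case=> ?; apply/orP; [left|right]; apply/nerveP; split=> //; apply: kGS.
Qed.

Lemma in_verts_setD1 a S k : (a \in verts (S :\ k)) = (vindex a != k) && (a \in verts S).
Proof. by rewrite !in_verts in_setD1. Qed.

Lemma nerve_vertex_links T S k :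
    k \in S -> k \notin T ->
  vertex_link (inl k) (nerve T S) :&: vertex_link (inr k) (nerve T S) =
  nerve (k |: T) (S :\ k).
Proof.
move=> kS kT; apply/setP => G; rewrite inE; apply/andP/nerveP.
  case=> /setIdP[/nerveP[GS _] /andP[lG /nerveP[_ lGr]]] /setIdP[_ /andP[rG /nerveP[_ rGr]]].
  split; last exact: realizable_hyperplane lGr rGr.
  apply/subsetP => a aG; rewrite in_verts_setD1 (subsetP GS _ aG) andbT.
  by apply/eqP => ak; case: a ak aG => i /= -> ?; [case/negP: lG | case/negP: rG].
case=> GSk rG; have GS : G \subset verts S.
  by apply: subset_trans GSk _; apply/subsetP => a; rewrite in_verts_setD1 => /andP[].
have [lGr rGr] := realizable_sides kT rG.
have kG b : vindex b = k -> b \notin G.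
  by move=> bk; apply: contra (subsetP GSk b) _; rewrite in_verts_setD1 bk eqxx.
have kGS b : vindex b = k -> b |: G \subset verts S.
  by move=> bk; rewrite subUset sub1set in_verts bk kS GS.
have GN : G \in nerve T S.
  by apply/nerveP; split=> //; case: lGr => x /(realizes_subset (subsetU1 _ _)); exists x.
have in_link b : vindex b = k -> realizable T (b |: G) -> G \in vertex_link b (nerve T S).
  by move=> bk bGr; rewrite inE GN kG //=; apply/nerveP; split=> //; apply: kGS.
by split; apply: in_link.
Qed.

Theorem nerve_collapsible_or_meet T S :
    [disjoint T & S] ->
  collapsible (nerve T S) \/ exists p, X p /\ hyp_inter w h (T :|: S) p.
Proof.
have [m] := ubnP #|S|; elim: m T S => // m IH T S ltSm TS.
have [->|[k kS]] := set_0Vmem S.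
  have [[x [Xx xT]]|no_meet] := pselect (exists x, X x /\ hyp_inter w h T x).
    by right; exists x; rewrite setU0.
  left; suff -> : nerve T set0 = set0 by constructor.
  apply/setP => G; rewrite in_set0; apply/negbTE/negP => /nerveP[_ [x [Xx xT _]]].
  by apply: no_meet; exists x.
have kT : k \notin T by rewrite (disjointFl TS kS).
have [||coll|[p [Xp pS]]] := IH (k |: T) (S :\ k).
- by rewrite (cardsD1 k S) kS in ltSm.
- rewrite disjoints_subset subUset sub1set !inE eqxx /=.
  by apply: subset_trans (_ : T \subset ~: S) _; rewrite ?setCS ?subD1set -?disjoints_subset.
- left; apply: (@collapsible_of_vertex_links _ (inl k) (inr k)).
  + exact: nerve_down_closed.
  + by [].
  + by move=> G; apply: nerve_pair_free.
  + by move=> G; apply: nerve_extend.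
  + by rewrite nerve_vertex_links.
- by right; exists p; rewrite -setUA setUCA (setD1K kS) in pS.
Qed.

Lemma nerve_full T S :
    [disjoint T & S] -> (exists p, X p /\ hyp_inter w h (T :|: S) p) ->
  nerve T S = polar_full S.
Proof.
move=> TS [p [Xp pTS]]; apply/setP => G; rewrite [in RHS]inE.
apply/nerveP/andP => [[GS [x rx]]|[GS /forallP pair_free]].
  by split=> //; apply/forallP => i; apply: realizes_pair_free rx.
split=> //; apply: (@realizable_push T (T :|: S) G p) => //; first exact: subsetUl.
move=> a /(subsetP GS); rewrite in_verts => aS; right.
by rewrite in_setD in_setU aS orbT (disjointFl TS aS).
Qed.

End Domain.

Definition inter_halfspaces (X : 'rV[R]_d -> Prop) F x := X x /\ forall a, a \in F -> 0 < aff a x.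

Lemma stable_in_sub (X Y : 'rV[R]_d -> Prop) :
  (forall x, Y x -> X x) -> stable_in X -> stable_in Y.
Proof. by move=> YX stableX T [x [/YX Xx xT]]; apply: stableX; exists x. Qed.

Lemma line_open_inter_halfspaces X F : line_open X -> line_open (inter_halfspaces X F).
Proof.
move=> lineX x v [Xx Fx]; apply: near0p_and (lineX x v Xx) (near0p_forall _) => a aF.
by apply: near0pW (near0p_gt0_affine (dotp (normal a) v) (Fx a aF)) => t _; rewrite aff_line.
Qed.

Lemma convex_inter_halfspaces X F : is_convex X -> is_convex (inter_halfspaces X F).
Proof.
move=> convX x y [Xx Fx] [Xy Fy] t t_ge0 t_le1; split; first exact: convX.
by move=> a aF; rewrite aff_convex; have := Fx a aF; have := Fy a aF; nra.
Qed.

Lemma in_Sigma_inl i sigma : (inl i \in Sigma sigma) = (i \in sigma).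
Proof. by rewrite inE (mem_imset _ _ inl_inj); case: imsetP => [[j _]|]; rewrite ?orbF. Qed.

Lemma in_Sigma_inr i sigma : (inr i \in Sigma sigma) = (i \notin sigma).
Proof. by rewrite inE (mem_imset _ _ inr_inj) inE; case: imsetP => [[j _]|]. Qed.

Section Code.
Variables (X : 'rV[R]_d -> Prop) (C : {set {set 'I_n}}).
Hypotheses (stableX : stable_in X) (lineX : line_open X) (codeC : is_code_of w h X C).

(* A point of the atom [A_sigma] may lie on some [H_j] with [j \notin sigma];
   it is pushed to their negative sides. *)
Lemma polar_realizable G : G \in polar C <-> realizable X set0 G.
Proof.
rewrite inE; split=> [/exists_inP[sigma sigmaC GSigma]|[x [Xx _ Gx]]].
  have [x [Xx [sigma_pos sigma_neg]]] := (codeC sigma).1 sigmaC.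
  apply: (realizable_push stableX lineX (U := [set i | aff (inl i) x == 0]) (p := x)).
  - exact: sub0set.
  - done.
  - by move=> i; rewrite inE => /eqP.
  - move=> i _; apply/negP => /andP[/(subsetP GSigma) + /(subsetP GSigma)].
    by rewrite in_Sigma_inl in_Sigma_inr => ->.
  - case=> i /(subsetP GSigma); first by rewrite in_Sigma_inl => /sigma_pos; left.
    rewrite in_Sigma_inr => /sigma_neg/negP; rewrite /in_pos -/(aff (inl i) x) -leNgt => nonpos.
    have [zero|neq0] := eqVneq (aff (inl i) x) 0; first by right; rewrite /= !inE; apply/eqP.
    by left; rewrite aff_inr oppr_gt0 lt_neqAle neq0.
pose sigma := [set i | 0 < aff (inl i) x].
apply/exists_inP; exists sigma.
  by apply/(codeC sigma); exists x; split=> //; split=> i; rewrite inE => // /negP.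
apply/subsetP; case=> i /Gx; rewrite ?in_Sigma_inl ?in_Sigma_inr inE //.
by rewrite aff_inr; lra.
Qed.

Lemma link_polar_nerve F :
  link F (polar C) = nerve (inter_halfspaces X F) set0 (~: supp F).
Proof.
apply/setP => nu; apply/idP/nerveP.
  case/setIdP=> _ /andP[nuF /polar_realizable[x rx]]; have [Xx _ nuFx] := rx.
  have xF : inter_halfspaces X F x by split=> // a aF; apply: nuFx; rewrite inE aF orbT.
  split; last by exists x; split=> // [i|a anu]; [rewrite inE | apply: nuFx; rewrite inE anu].
  apply/subsetP => a anu; rewrite in_verts !inE negb_or.
  have aF : a \notin F by rewrite (disjointFr nuF anu).
  have := realizes_pair_free (vindex a) rx.
  by case: a anu aF => i anu aF /=; rewrite !inE anu aF ?orbT ?andbT /= => /norP[].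
case=> nuS [x [[Xx Fx] _ nux]].
have nuF : [disjoint nu & F].
  rewrite disjoints_subset; apply/subsetP => a /(subsetP nuS).
  by rewrite in_verts !inE negb_or; case: a => i /= /andP[].
have nuFx : realizable X set0 (nu :|: F).
  by exists x; split=> // [i|a /setUP[/nux|/Fx]]; rewrite ?inE.
rewrite inE nuF; apply/andP; split; apply/polar_realizable => //.
by case: nuFx => y /(realizes_subset (subsetUl _ _)); exists y.
Qed.

End Code.
End Arrangement.

Theorem theoremB (R : realType) (n : nat) (C : {set {set 'I_n}}) :
  stable_hyperplane_code R C ->
  ~ (exists F : {set ('I_n + 'I_n)%type},
       nonmaximal_face (polar C) F /\
       ~ collapsible (link F (polar C)) /\
       link F (polar C) <> polar_full (~: supp F)).
Proof.
(* The dichotomy holds for every face [F], maximal or not. *)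
move=> [d [w [h [X [[_ [openX [convX stableX]]] codeC]]]]] [F [_ [not_coll not_full]]].
have lineX := open_line_open openX.
have stableXF : stable_in w h (inter_halfspaces w h X F).
  by apply: stable_in_sub stableX => x [].
have lineXF : line_open (inter_halfspaces w h X F) := line_open_inter_halfspaces lineX.
have convXF : is_convex (inter_halfspaces w h X F) := convex_inter_halfspaces convX.
rewrite (link_polar_nerve stableX lineX codeC) in not_coll not_full.
have disj : [disjoint set0 & ~: supp F] by rewrite disjoints_subset sub0set.
have [//|meet] := nerve_collapsible_or_meet stableXF lineXF convXF disj.
exact: not_full (nerve_full stableXF lineXF disj meet).
Qed.
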